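(* Let $a,b>0$, $0<\alpha<1$, $0<A<1$, $B>0$ and $\beta=A+iB$. Define for $\omega>0$ $$\hat E(\omega)=a(i\omega)^{\alpha}+b\big((i\omega)^{\beta}+(i\omega)^{\bar\beta}\big).$$ (i) If $\operatorname{Re}\hat E(\omega)\ge0$ and $\operatorname{Im}\hat E(\omega)\ge 0$ for all $\omega>0$, then $A=\alpha$. (ii) If $A=\alpha$, then $\operatorname{Re}\hat E(\omega)\ge0$ and $\operatorname{Im}\hat E(\omega)\ge 0$ for all $\omega>0$ if and only if $$a\ge 2b\cosh\frac{B\pi}{2}\sqrt{1+\Big(\cot\frac{\alpha\pi}{2}\tanh\frac{B\pi}{2}\Big)^2}\quad\text{when }\alpha\in(0,\tfrac12],$$ $$a\ge 2b\cosh\frac{B\pi}{2}\sqrt{1+\Big(\tan\frac{\alpha\pi}{2}\tanh\frac{B\pi}{2}\Big)^2}\quad\text{when }\alpha\in[\tfrac12,1).$$ In particular these conditions imply $a\ge 2b$.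
   Context: For $\omega>0$ and $\gamma\in\mathbb C$, $(i\omega)^\gamma=\omega^\gamma e^{i\gamma\pi/2}$ with $\omega^\gamma=e^{\gamma\ln\omega}$ (principal branch). *)

From Stdlib Require Import Reals.
Open Scope R_scope.

Definition Cplx : Type := (R * R)%type.
Definition Re (z : Cplx) : R := fst z.
Definition Im (z : Cplx) : R := snd z.
Definition Cadd (z w : Cplx) : Cplx := (Re z + Re w, Im z + Im w).
Definition Cmul (z w : Cplx) : Cplx :=
  (Re z * Re w - Im z * Im w, Re z * Im w + Im z * Re w).
Definition Cscal (r : R) (z : Cplx) : Cplx := (r * Re z, r * Im z).
Definition Cconj (z : Cplx) : Cplx := (Re z, - Im z).
Definition Cexp (z : Cplx) : Cplx := (exp (Re z) * cos (Im z), exp (Re z) * sin (Im z)).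

(* (i w)^g := w^g * e^{i g pi / 2}, with w^g := e^{g ln w} (principal branch) *)
Definition ipow (w : R) (g : Cplx) : Cplx :=
  Cmul (Cexp (Cscal (ln w) g)) (Cexp (Cmul (0, PI / 2) g)).

Definition Ehat (a b alpha : R) (beta : Cplx) (w : R) : Cplx :=
  Cadd (Cscal a (ipow w (alpha, 0)))
       (Cscal b (Cadd (ipow w beta) (ipow w (Cconj beta)))).

Definition cot (x : R) : R := cos x / sin x.

(* Put w = e^t.  The two beta-terms combine into
   2 b e^(A t) (cosh(B pi/2) e^(i A pi/2) cos(B t) - i sinh(B pi/2) e^(i A pi/2) sin(B t)),
   a sinusoid in B t whose amplitude grows like e^(A t), against a e^(alpha t) e^(i alpha pi/2).
   If A <> alpha, let t -> +oo or -oo (so that e^((A - alpha) t) -> +oo) along cos(B t) = -1: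
   the real part becomes negative.  If A = alpha, Re and Im are e^(alpha t) times
   C + X cos(B t) + Y sin(B t), which is nonnegative for all t iff X^2 + Y^2 <= C^2; for the
   real part this reads a >= threshold with tan(alpha pi/2), for the imaginary part with
   cot(alpha pi/2), and the larger of tan and cot decides according to alpha <= 1/2. *)

From Stdlib Require Import Reals Lra Psatz.
Open Scope R_scope.

Lemma sinusoid_nonneg_iff (C X Y : R) : 0 < X ->
  (forall t, 0 <= C + X * cos t + Y * sin t) <-> 0 <= C /\ X ^ 2 + Y ^ 2 <= C ^ 2.
Proof.
  intros hX; split.
  - intros H.
    set (u := Y / X); set (r := sqrt (1 + u²)).
    assert (hr2 : r * r = 1 + u²) by (apply sqrt_sqrt; unfold Rsqr; nra).
    assert (hr : 0 < r) by (apply sqrt_lt_R0; unfold Rsqr; nra).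
    assert (hY : Y = u * X) by (unfold u; field; lra).
    (* the minimum is attained where (cos t, sin t) points opposite to (X, Y) *)
    specialize (H (atan u + PI)).
    rewrite neg_cos, neg_sin, cos_atan, sin_atan in H; fold r in H.
    assert (hmin : X * - (1 / r) + Y * - (u / r) = - (X * r)).
    { replace (- (X * r)) with (- X * (r * r) / r) by (field; lra).
      rewrite hr2, hY; unfold Rsqr; field; lra. }
    assert (hXrC : X * r <= C) by lra.
    assert (hXr : X * r * (X * r) <= C * C) by (apply Rmult_le_compat; nra).
    replace (X * r * (X * r)) with (X * X * (r * r)) in hXr by ring.
    rewrite hr2 in hXr; rewrite hY; split; [nra | unfold Rsqr in hXr; nra].
  - intros [hC hXY] t.
    assert (hCS : (X * cos t + Y * sin t) ^ 2 <= C ^ 2).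
    { pose proof (sin2_cos2 t) as hsc; unfold Rsqr in hsc.
      pose proof (pow2_ge_0 (X * sin t - Y * cos t)).
      assert ((X ^ 2 + Y ^ 2) * (sin t * sin t + cos t * cos t)
              = (X * cos t + Y * sin t) ^ 2 + (X * sin t - Y * cos t) ^ 2) by ring.
      nra. }
    nra.
Qed.

Lemma cosh_ge_1 (x : R) : 1 <= cosh x.
Proof.
  unfold cosh.
  assert (E : exp x * exp (- x) = 1) by (rewrite <- exp_plus, Rplus_opp_r; exact exp_0).
  pose proof (exp_pos x); pose proof (exp_pos (- x)).
  assert (4 <= (exp x + exp (- x)) ^ 2) by (pose proof (pow2_ge_0 (exp x - exp (- x))); nra).
  nra.
Qed.

Lemma tan_le_cot (x : R) : 0 < x -> x <= PI / 4 -> tan x <= cot x.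
Proof.
  intros hx0 hx1; pose proof PI_RGT_0.
  assert (hs : 0 < sin x) by (apply sin_gt_0; lra).
  assert (hc : 0 < cos x) by (apply cos_gt_0; lra).
  assert (h2 : 0 <= cos (2 * x)) by (apply cos_ge_0; lra).
  rewrite cos_2a in h2.
  assert (E : cot x - tan x = (cos x * cos x - sin x * sin x) / (cos x * sin x))
    by (unfold tan, cot; field; lra).
  assert (0 <= cot x - tan x) by (rewrite E; apply Rle_mult_inv_pos; nra).
  lra.
Qed.

Lemma cot_le_tan (x : R) : PI / 4 <= x -> x < PI / 2 -> cot x <= tan x.
Proof.
  intros hx0 hx1.
  assert (H : tan (PI / 2 - x) <= cot (PI / 2 - x)) by (apply tan_le_cot; lra).
  unfold tan, cot in *; rewrite cos_shift, sin_shift in H; exact H.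
Qed.

Lemma cos_eq_m1_unbounded (B N : R) : 0 < B -> exists s, N < s /\ cos (B * s) = -1.
Proof.
  intros hB; pose proof PI_RGT_0 as hPI.
  destruct (INR_unbounded (N * B / (2 * PI))) as [n hn].
  exists ((PI + 2 * INR n * PI) / B); split.
  - apply (Rmult_lt_reg_r B); [exact hB|].
    replace ((PI + 2 * INR n * PI) / B * B) with (PI + 2 * INR n * PI) by (field; lra).
    replace (N * B) with (N * B / (2 * PI) * (2 * PI)) by (field; lra).
    nra.
  - replace (B * ((PI + 2 * INR n * PI) / B)) with (PI + 2 * INR n * PI) by (field; lra).
    rewrite cos_period; exact cos_PI.
Qed.

Lemma exists_cos_eq_m1_beyond (B d M : R) :
  0 < B -> d <> 0 -> exists t, cos (B * t) = -1 /\ M < d * t.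
Proof.
  intros hB hd; destruct (Rlt_or_le 0 d) as [dpos | dneg].
  - destruct (cos_eq_m1_unbounded B (M / d) hB) as [s [hs hc]].
    exists s; split; [exact hc|].
    replace M with (d * (M / d)) by (field; lra); nra.
  - destruct (cos_eq_m1_unbounded B (M / - d) hB) as [s [hs hc]].
    exists (- s); split.
    + replace (B * - s) with (- (B * s)) by ring; rewrite cos_neg; exact hc.
    + replace M with (- d * (M / - d)) by (field; lra); nra.
Qed.

Lemma nonneg_on_pos_iff_log (g f : R -> R) (al m B : R) : 0 < m -> B <> 0 ->
  (forall w, 0 < w -> g w = exp (al * ln w) * m * f (B * ln w)) ->
  (forall w, 0 < w -> 0 <= g w) <-> (forall t, 0 <= f t).
Proof.
  intros hm hB hg; split.
  - intros H t.
    specialize (H (exp (t / B)) (exp_pos _)).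
    rewrite hg, ln_exp in H by apply exp_pos.
    replace (B * (t / B)) with t in H by (field; exact hB).
    pose proof (exp_pos (al * (t / B))).
    apply (Rmult_le_reg_l (exp (al * (t / B)) * m)); [nra | lra].
  - intros H w hw; rewrite hg by exact hw.
    apply Rmult_le_pos; [pose proof (exp_pos (al * ln w)); nra | apply H].
Qed.

Definition threshold (b B k : R) : R :=
  2 * b * cosh (B * PI / 2) * sqrt (1 + (k * tanh (B * PI / 2)) ^ 2).

Lemma threshold_ge (b B k : R) : 0 <= b -> 2 * b <= threshold b B k.
Proof.
  intros hb; unfold threshold.
  pose proof (cosh_ge_1 (B * PI / 2)).
  assert (1 <= sqrt (1 + (k * tanh (B * PI / 2)) ^ 2)).
  { rewrite <- sqrt_1 at 1; apply sqrt_le_1_alt; pose proof (pow2_ge_0 (k * tanh (B * PI / 2))); lra. }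
  assert (2 * b <= 2 * b * cosh (B * PI / 2)) by nra.
  assert (0 <= 2 * b * cosh (B * PI / 2)) by nra.
  nra.
Qed.

Lemma threshold_le (b B k k' : R) : 0 <= b -> 0 <= k <= k' -> threshold b B k <= threshold b B k'.
Proof.
  intros hb hk; unfold threshold.
  apply Rmult_le_compat_l; [pose proof (cosh_ge_1 (B * PI / 2)); nra|].
  apply sqrt_le_1_alt.
  pose proof (pow2_ge_0 (tanh (B * PI / 2))).
  assert (k ^ 2 <= k' ^ 2) by nra.
  nra.
Qed.

Lemma threshold_opp (b B k : R) : threshold b B (- k) = threshold b B k.
Proof. unfold threshold; f_equal; f_equal; ring. Qed.

Lemma threshold_sqr (b B k : R) :
  threshold b B k ^ 2 = (2 * b * cosh (B * PI / 2)) ^ 2 + (2 * b * k * sinh (B * PI / 2)) ^ 2.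
Proof.
  unfold threshold, tanh; pose proof (cosh_ge_1 (B * PI / 2)).
  rewrite Rpow_mult_distr, pow2_sqrt by (apply Rplus_le_le_0_compat; [lra | apply pow2_ge_0]).
  field; lra.
Qed.

Lemma sinusoid_threshold_iff (a b B k : R) : 0 < b ->
  (forall t, 0 <= a + 2 * b * cosh (B * PI / 2) * cos t + 2 * b * k * sinh (B * PI / 2) * sin t)
  <-> threshold b B k <= a.
Proof.
  intros hb; pose proof (cosh_ge_1 (B * PI / 2)).
  rewrite sinusoid_nonneg_iff, <- threshold_sqr by nra.
  pose proof (threshold_ge b B k ltac:(lra)).
  split; [intros [ha hT]; nra | intros hT; split; nra].
Qed.

Lemma threshold_tan_cot_iff (a b al B : R) : 0 <= b -> 0 < al -> al < 1 ->
  threshold b B (tan (al * PI / 2)) <= a /\ threshold b B (cot (al * PI / 2)) <= a <->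
  (al <= 1/2 -> a >= threshold b B (cot (al * PI / 2))) /\
  (1/2 <= al -> a >= threshold b B (tan (al * PI / 2))).
Proof.
  intros hb hal0 hal1; pose proof PI_RGT_0.
  assert (htan : 0 < tan (al * PI / 2)).
  { unfold tan; apply Rdiv_lt_0_compat; [apply sin_gt_0 | apply cos_gt_0]; nra. }
  assert (hcot : 0 < cot (al * PI / 2)).
  { unfold cot; apply Rdiv_lt_0_compat; [apply cos_gt_0 | apply sin_gt_0]; nra. }
  split; [intros [Ht Hc]; split; intros _; lra |].
  intros [Hle Hge]; destruct (Rle_or_lt al (1/2)) as [hal | hal].
  - assert (threshold b B (tan (al * PI / 2)) <= threshold b B (cot (al * PI / 2)))
      by (apply threshold_le; [exact hb | split; [lra | apply tan_le_cot; nra]]).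
    specialize (Hle hal); lra.
  - assert (threshold b B (cot (al * PI / 2)) <= threshold b B (tan (al * PI / 2)))
      by (apply threshold_le; [exact hb | split; [lra | apply cot_le_tan; nra]]).
    specialize (Hge ltac:(lra)); lra.
Qed.

Lemma ipow_polar (w g1 g2 : R) :
  ipow w (g1, g2) =
  (exp (g1 * ln w - g2 * PI / 2) * cos (g2 * ln w + g1 * PI / 2),
   exp (g1 * ln w - g2 * PI / 2) * sin (g2 * ln w + g1 * PI / 2)).
Proof.
  unfold ipow, Cmul, Cexp, Cscal, Re, Im; cbn.
  rewrite !Rmult_0_l, Rminus_0_l, Rplus_0_l.
  replace (g1 * ln w - g2 * PI / 2) with (ln w * g1 + - (PI / 2 * g2)) by field.
  replace (g2 * ln w + g1 * PI / 2) with (ln w * g2 + PI / 2 * g1) by field.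
  rewrite exp_plus, cos_plus, sin_plus; f_equal; ring.
Qed.

Lemma Ehat_eq (a b al A B w : R) :
  Ehat a b al (A, B) w =
  (a * exp (al * ln w) * cos (al * PI / 2)
     + 2 * b * exp (A * ln w) * (cosh (B * PI / 2) * cos (A * PI / 2) * cos (B * ln w)
                                 + sinh (B * PI / 2) * sin (A * PI / 2) * sin (B * ln w)),
   a * exp (al * ln w) * sin (al * PI / 2)
     + 2 * b * exp (A * ln w) * (cosh (B * PI / 2) * sin (A * PI / 2) * cos (B * ln w)
                                 - sinh (B * PI / 2) * cos (A * PI / 2) * sin (B * ln w))).
Proof.
  unfold Ehat; change (Cconj (A, B)) with (A, - B); rewrite !ipow_polar.
  unfold Cadd, Cscal, Re, Im, cosh, sinh; cbn.
  replace (al * ln w - 0 * PI / 2) with (al * ln w) by field.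
  replace (0 * ln w + al * PI / 2) with (al * PI / 2) by field.
  replace (A * ln w - B * PI / 2) with (A * ln w + - (B * PI / 2)) by field.
  replace (A * ln w - - B * PI / 2) with (A * ln w + B * PI / 2) by field.
  replace (- B * ln w + A * PI / 2) with (- (B * ln w) + A * PI / 2) by field.
  rewrite !exp_plus, !cos_plus, !sin_plus, cos_neg, sin_neg; f_equal; field.
Qed.

Lemma Re_Ehat_antiphase (a b al A B t : R) : cos (B * t) = -1 ->
  Re (Ehat a b al (A, B) (exp t)) =
  exp (al * t) * (a * cos (al * PI / 2)
                  - 2 * b * cosh (B * PI / 2) * cos (A * PI / 2) * exp ((A - al) * t)).
Proof.
  intros hc.
  assert (hs : sin (B * t) = 0).
  { pose proof (sin2_cos2 (B * t)) as h; rewrite hc in h; unfold Rsqr in h; nra. }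
  rewrite Ehat_eq, ln_exp; cbn; rewrite hc, hs.
  replace (A * t) with (al * t + (A - al) * t) by ring; rewrite exp_plus; ring.
Qed.

Lemma Re_Ehat_nonneg_exponent_eq (a b al A B : R) :
  0 < a -> 0 < b -> 0 < al -> al < 1 -> 0 < A -> A < 1 -> 0 < B ->
  (forall w, 0 < w -> 0 <= Re (Ehat a b al (A, B) w)) -> A = al.
Proof.
  intros ha hb hal0 hal1 hA0 hA1 hB Hre; pose proof PI_RGT_0 as hPI.
  destruct (Req_dec A al) as [e | ne]; [exact e | exfalso].
  set (ca := cos (al * PI / 2)); set (D := 2 * b * cosh (B * PI / 2) * cos (A * PI / 2)).
  assert (hca : 0 < ca) by (apply cos_gt_0; nra).
  assert (hD : 0 < D).
  { assert (0 < cos (A * PI / 2)) by (apply cos_gt_0; nra).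
    pose proof (cosh_ge_1 (B * PI / 2)); unfold D; apply Rmult_lt_0_compat; nra. }
  destruct (exists_cos_eq_m1_beyond B (A - al) (ln (a * ca / D)) hB) as [t [hc ht]]; [lra|].
  assert (hgrow : a * ca / D < exp ((A - al) * t)).
  { rewrite <- (exp_ln (a * ca / D)) by (apply Rdiv_lt_0_compat; nra).
    apply exp_increasing; exact ht. }
  assert (hneg : a * ca - D * exp ((A - al) * t) < 0).
  { apply (Rmult_lt_compat_l D) in hgrow; [|exact hD].
    replace (D * (a * ca / D)) with (a * ca) in hgrow by (field; lra); lra. }
  specialize (Hre (exp t) (exp_pos t)); rewrite Re_Ehat_antiphase in Hre by exact hc.
  fold ca D in Hre; pose proof (exp_pos (al * t)); nra.
Qed.

Lemma Re_Ehat_nonneg_iff (a b al B : R) : 0 < b -> 0 < al -> al < 1 -> 0 < B ->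
  (forall w, 0 < w -> 0 <= Re (Ehat a b al (al, B) w)) <-> threshold b B (tan (al * PI / 2)) <= a.
Proof.
  intros hb hal0 hal1 hB; pose proof PI_RGT_0.
  assert (hc : 0 < cos (al * PI / 2)) by (apply cos_gt_0; nra).
  rewrite <- sinusoid_threshold_iff by exact hb.
  apply nonneg_on_pos_iff_log with (al := al) (m := cos (al * PI / 2)) (B := B); [exact hc | lra |].
  intros w _; rewrite Ehat_eq; cbn; unfold tan; field; lra.
Qed.

Lemma Im_Ehat_nonneg_iff (a b al B : R) : 0 < b -> 0 < al -> al < 1 -> 0 < B ->
  (forall w, 0 < w -> 0 <= Im (Ehat a b al (al, B) w)) <-> threshold b B (cot (al * PI / 2)) <= a.
Proof.
  intros hb hal0 hal1 hB; pose proof PI_RGT_0.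
  assert (hs : 0 < sin (al * PI / 2)) by (apply sin_gt_0; nra).
  rewrite <- threshold_opp, <- sinusoid_threshold_iff by exact hb.
  apply nonneg_on_pos_iff_log with (al := al) (m := sin (al * PI / 2)) (B := B); [exact hs | lra |].
  intros w _; rewrite Ehat_eq; cbn; unfold cot; field; lra.
Qed.

Lemma Ehat_nonneg_iff (a b al B : R) : 0 < b -> 0 < al -> al < 1 -> 0 < B ->
  (forall w, 0 < w -> 0 <= Re (Ehat a b al (al, B) w) /\ 0 <= Im (Ehat a b al (al, B) w))
  <-> threshold b B (tan (al * PI / 2)) <= a /\ threshold b B (cot (al * PI / 2)) <= a.
Proof.
  intros hb hal0 hal1 hB.
  rewrite <- Re_Ehat_nonneg_iff, <- Im_Ehat_nonneg_iff by assumption.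
  split; [intros H; split; intros w hw; apply H, hw | intros [Hre Him] w hw; auto].
Qed.

Theorem mainTheorem4 (a b alpha A B : R)
  (ha : 0 < a) (hb : 0 < b) (hal0 : 0 < alpha) (hal1 : alpha < 1)
  (hA0 : 0 < A) (hA1 : A < 1) (hB : 0 < B) :
  let beta : Cplx := (A, B) in
  let nonneg := forall w : R, 0 < w ->
      0 <= Re (Ehat a b alpha beta w) /\ 0 <= Im (Ehat a b alpha beta w) in
  let crit :=
      (alpha <= 1/2 ->
         a >= 2 * b * cosh (B * PI / 2)
                * sqrt (1 + (cot (alpha * PI / 2) * tanh (B * PI / 2)) ^ 2)) /\
      (1/2 <= alpha ->
         a >= 2 * b * cosh (B * PI / 2)
                * sqrt (1 + (tan (alpha * PI / 2) * tanh (B * PI / 2)) ^ 2)) in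
  (nonneg -> A = alpha) /\
  (A = alpha -> (nonneg <-> crit)) /\
  (crit -> a >= 2 * b).
Proof.
  intros beta nonneg crit; split; [| split].
  - intros H; apply (Re_Ehat_nonneg_exponent_eq a b alpha A B); try assumption.
    intros w hw; apply (H w hw).
  - intros ->; unfold nonneg, beta; rewrite Ehat_nonneg_iff by assumption.
    apply threshold_tan_cot_iff; lra.
  - intros [Hle Hge].
    pose proof (threshold_ge b B (cot (alpha * PI / 2)) ltac:(lra)).
    pose proof (threshold_ge b B (tan (alpha * PI / 2)) ltac:(lra)).
    unfold threshold in *; destruct (Rle_or_lt alpha (1/2)) as [hal | hal].
    + specialize (Hle hal); lra.
    + specialize (Hge ltac:(lra)); lra.
Qed.
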